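(* Let $(G,\tau,\oplus)$ be a topological gyrogroup and let $G^{\bullet}$ be the gyrogroup of step functions defined in the context. Then the family $\{O(V,\varepsilon): V \text{ an open neighbourhood of } 0 \text{ in } G,\ \varepsilon>0\}$ is a local base at the identity $\mathbf{0}^{\bullet}$ of a topology on $G^{\bullet}$ which makes $(G^{\bullet},\oplus^{\bullet})$ a Hausdorff topological gyrogroup; in this topology, for each $f\in G^{\bullet}$ the sets $f\oplus^{\bullet}O(V,\varepsilon)$ form a local base at $f$.
   Context: A gyrogroup is a set $G$ with a binary operation $\oplus$ such that: (G1) there is a unique identity $0$ with $0\oplus a=a=a\oplus 0$; (G2) each $x$ has a unique inverse $\ominus x$ with $\ominus x\oplus x=0=x\oplus(\ominus x)$; (G3) for all $x,y$ there is an automorphism $\mathrm{gyr}[x,y]$ of $(G,\oplus)$ with $x\oplus(y\oplus z)=(x\oplus y)\oplus \mathrm{gyr}[x,y](z)$ for all $z$; (G4) $\mathrm{gyr}[x\oplus y,y]=\mathrm{gyr}[x,y]$. A topological gyrogroup is a gyrogroup with a topology (all spaces are assumed $T_1$) such that $\oplus:G\times G\to G$ is jointly continuous and $x\mapsto\ominus x$ is continuous. Construction: let $J=[0,1)$ and let $G^{\bullet}$ be the set of all functions $f:J\to G$ for which there exist $0=a_0<a_1<\dots<a_n=1$ with $f$ constant on each $[a_k,a_{k+1})$. Define $(f\oplus^{\bullet}g)(r)=f(r)\oplus g(r)$; then $(G^{\bullet},\oplus^{\bullet})$ is a gyrogroup with identity $\mathbf{0}^{\bullet}$ (the constant function $0$),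 inverse $(\ominus^{\bullet}f)(r)=\ominus f(r)$, and gyrations $\mathrm{gyr}[f,g](h)(r)=\mathrm{gyr}[f(r),g(r)](h(r))$. For an open neighbourhood $V$ of $0$ in $G$ and $\varepsilon>0$ let $O(V,\varepsilon)=\{f\in G^{\bullet}:\mu(\{r\in J: f(r)\notin V\})<\varepsilon\}$, where $\mu$ is Lebesgue measure. *)

From HB Require Import structures.
From mathcomp Require Import all_boot all_order all_algebra.
From mathcomp Require Import all_classical all_reals all_analysis.
Set Implicit Arguments. Unset Strict Implicit. Unset Printing Implicit Defensive.
Import Order.TTheory GRing.Theory Num.Theory.
Local Open Scope classical_set_scope.
Local Open Scope ring_scope.

Definition gyr_automorphisms {X : Type} (S : set X) (op : X -> X -> X)
    (gyr : X -> X -> X -> X) : Prop :=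
  forall x y, S x -> S y ->
    [/\ (forall z, S z -> S (gyr x y z)),
        (forall z w, S z -> S w -> gyr x y z = gyr x y w -> z = w),
        (forall w, S w -> exists2 z, S z & gyr x y z = w) &
        (forall a b, S a -> S b -> gyr x y (op a b) = op (gyr x y a) (gyr x y b))].

Definition is_gyrogroup {X : Type} (S : set X) (op : X -> X -> X) (z : X)
    (inv : X -> X) : Prop :=
  [/\
      [/\ S z, (forall a b, S a -> S b -> S (op a b)) &
           (forall a, S a -> S (inv a))],
      (forall a, S a -> op z a = a /\ op a z = a) /\
      (forall z', S z' -> (forall a, S a -> op z' a = a /\ op a z' = a) -> z' = z),
      (forall x, S x -> op (inv x) x = z /\ op x (inv x) = z) /\
      (forall x y, S x -> S y -> op y x = z -> op x y = z -> y = inv x) &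
      exists gyr : X -> X -> X -> X,
        [/\ gyr_automorphisms S op gyr,
            (forall x y w, S x -> S y -> S w ->
               op x (op y w) = op (op x y) (gyr x y w)) &
            (forall x y w, S x -> S y -> S w ->
               gyr (op x y) y w = gyr x y w)]].

Definition topology_on {X : Type} (S : set X) (T : set (set X)) : Prop :=
  [/\ (forall U, T U -> U `<=` S),
      T S, T set0,
      (forall F : set (set X), F `<=` T -> T (\bigcup_(U in F) U)) &
      (forall U V, T U -> T V -> T (U `&` V))].

Definition T1_on {X : Type} (S : set X) (T : set (set X)) : Prop :=
  forall x y, S x -> S y -> x <> y -> exists2 U, T U & U x /\ ~ U y.

Definition hausdorff_on {X : Type} (S : set X) (T : set (set X)) : Prop :=
  forall x y, S x -> S y -> x <> y ->
    exists U, exists V, [/\ T U, T V, U x, V y & U `&` V = set0].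

Definition prod_open {X : Type} (S : set X) (T : set (set X)) (W : set (X * X)) :
    Prop :=
  W `<=` S `*` S /\
  forall p, W p -> exists U, exists V,
    [/\ T U, T V, U p.1, V p.2 & U `*` V `<=` W].

Definition continuous_op {X : Type} (S : set X) (T : set (set X))
    (op : X -> X -> X) : Prop :=
  forall W, T W -> prod_open S T [set p | (S `*` S) p /\ W (op p.1 p.2)].

Definition continuous_on_carrier {X : Type} (S : set X) (T : set (set X)) (f : X -> X) :
    Prop :=
  forall W, T W -> T [set x | S x /\ W (f x)].

(* topological gyrogroup (all spaces are assumed T1) *)
Definition is_topological_gyrogroup {X : Type} (S : set X) (T : set (set X))
    (op : X -> X -> X) (z : X) (inv : X -> X) : Prop :=
  [/\ is_gyrogroup S op z inv, topology_on S T, T1_on S T,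
      continuous_op S T op & continuous_on_carrier S T inv].

Definition is_nbhd {X : Type} (T : set (set X)) (x : X) (N : set X) : Prop :=
  exists2 U, T U & U x /\ U `<=` N.

Definition J (R : realType) := {r : R | (0 <= r) && (r < 1)}.

Definition is_step {R : realType} {G : Type} (f : J R -> G) : Prop :=
  exists (n : nat) (a : nat -> R),
    [/\ a 0%N = 0, a n = 1,
        (forall k, (k < n)%N -> a k < a k.+1) &
        (forall k, (k < n)%N -> forall r s : J R,
           a k <= sval r < a k.+1 -> a k <= sval s < a k.+1 -> f r = f s)].

Definition stepfuns (R : realType) (G : Type) : set (J R -> G) := [set f | is_step f].
Arguments stepfuns : clear implicits.

Definition op_pt {R : realType} {G : Type} (op : G -> G -> G) (f g : J R -> G) :
  J R -> G := fun r => op (f r) (g r).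
Definition zero_pt {R : realType} {G : Type} (z : G) : J R -> G := fun _ => z.
Definition inv_pt {R : realType} {G : Type} (inv : G -> G) (f : J R -> G) :
  J R -> G := fun r => inv (f r).

Definition Obig {R : realType} {G : Type} (V : set G) (eps : R) : set (J R -> G) :=
  [set f : J R -> G | is_step f /\
     (lebesgue_measure [set r : R | exists h : ((0 <= r) && (r < 1))%R,
                                     ~ V (f (exist _ r h))] < eps%:E)%E].

From HB Require Import structures.
From mathcomp Require Import all_boot all_order all_algebra.
From mathcomp Require Import all_classical all_reals all_analysis.
From Stdlib Require List.
Set Implicit Arguments. Unset Strict Implicit. Unset Printing Implicit Defensive.
Import Order.TTheory GRing.Theory Num.Theory.
Local Open Scope classical_set_scope.
Local Open Scope ring_scope.

(* A step function takes finitely many values, so the continuity of the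
   operations of G at these values yields neighbourhoods that work uniformly
   on J; a point r where the conclusion fails is then a point where one of
   the arguments leaves its neighbourhood, and subadditivity of Lebesgue
   measure bounds the size of the failure set.  For the Hausdorff property, pick an interval of the common
   partition of f and g on which f and g take distinct values; it has
   positive length l, and two neighbourhoods O(A, l/2), O(B, l/2) separating
   these values would force the interval to be covered by two sets of
   measure < l/2. *)

Section StepFunctions.
Variable R : realType.

Lemma J_bounds (r : J R) : 0 <= sval r /\ sval r < 1.
Proof. by case: r => x /= /andP. Qed.

Lemma is_step_cst X (c : X) : is_step (fun _ : J R => c).
Proof. by exists 1%N, (fun k => k%:R); split => // k _; rewrite ltr_nat. Qed.

Lemma is_step_factor X Y (p : J R -> X) (q : J R -> Y) : is_step p ->
  (forall r t, p r = p t -> q r = q t) -> is_step q.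
Proof.
case=> n [a [a0 an a_incr a_step]] pq; exists n, a; split => // k kn r s Hr Hs.
exact/pq/(a_step k kn r s Hr Hs).
Qed.

Lemma partition_le n (a : nat -> R) : (forall k, (k < n)%N -> a k < a k.+1) ->
  forall i j, (i <= j)%N -> (j <= n)%N -> a i <= a j.
Proof.
move=> a_incr i j; elim: j => [|j IH]; first by rewrite leqn0 => /eqP ->.
rewrite leq_eqVlt => /orP [/eqP -> //|]; rewrite ltnS => ij jn.
exact: le_trans (IH ij (ltnW jn)) (ltW (a_incr j jn)).
Qed.

Lemma partition_cover n (a : nat -> R) : a 0%N = 0 -> a n = 1 ->
  (forall k, (k < n)%N -> a k < a k.+1) ->
  forall x, 0 <= x -> x < 1 -> exists k, (k < n)%N /\ a k <= x < a k.+1.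
Proof.
move=> a0 an a_incr x x0 x1.
have: forall m, (m <= n)%N ->
    a m <= x \/ exists k, (k < m)%N /\ a k <= x < a k.+1.
  elim=> [|m IH] mn; first by left; rewrite a0.
  case: (IH (ltnW mn)) => [am|[k [km Hk]]]; last by right; exists k; split => //; apply: ltnW.
  case: (leP (a m.+1) x) => h; first by left.
  by right; exists m; split => //; rewrite am.
case/(_ n (leqnn n)) => [|[k [kn Hk]]]; last by exists k.
by rewrite an => h; move: (lt_le_trans x1 h); rewrite ltxx.
Qed.

Lemma is_step_finite_range X (f : J R -> X) : is_step f ->
  exists s : list X, forall r, List.In (f r) s.
Proof.
case=> n [a [a0 an a_incr a_step]].
have r0p : (0 <= (0:R)) && ((0:R) < 1) by rewrite lexx ltr01.
have: forall k, exists x, forall r, (k < n)%N -> a k <= sval r < a k.+1 -> f r = x.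
  move=> k; case: (pselect (exists r : J R, (k < n)%N /\ a k <= sval r < a k.+1)).
    by case=> r [kn Hr]; exists (f r) => t _ Ht; exact: a_step k kn t r Ht Hr.
  by move=> Hn; exists (f (exist _ 0 r0p)) => r kn Hr; exfalso; apply: Hn; exists r.
case/choice => v Hv.
have [s Hs] : exists s, forall k, (k < n)%N -> List.In (v k) s.
  elim: n {a0 an a_incr a_step Hv} => [|m [s Hs]]; first by exists nil.
  exists (v m :: s) => k; rewrite ltnS leq_eqVlt => /orP [/eqP ->|km]; first by left.
  by right; apply: Hs.
exists s => r; have [r0 r1] := J_bounds r.
have [k [kn Hk]] := partition_cover a0 an a_incr r0 r1.
by rewrite (Hv k r kn Hk); apply: Hs.
Qed.

(* An equivalent description of step functions, better behaved under
   pairing: the union of two breakpoint lists is a breakpoint list. *)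
Definition constant_off_breakpoints X (f : J R -> X) (s : seq R) :=
  forall r t : J R, sval r <= sval t ->
    (forall p, p \in s -> ~ (sval r < p <= sval t)) -> f r = f t.

Lemma is_step_breakpoints X (f : J R -> X) : is_step f ->
  exists s, constant_off_breakpoints f s.
Proof.
case=> n [a [a0 an a_incr a_step]].
exists [seq a k | k <- iota 0 n.+1] => r t rt Hno.
have [r0 r1] := J_bounds r.
have [k [kn /andP [Hk1 Hk2]]] := partition_cover a0 an a_incr r0 r1.
have tk : sval t < a k.+1.
  rewrite ltNge; apply/negP => Ht; apply: (Hno (a k.+1)).
    by apply: map_f; rewrite mem_iota add0n ltnS.
  by rewrite Hk2 Ht.
apply: (a_step k kn r t); first by rewrite Hk1 Hk2.
by rewrite (le_trans Hk1 rt) tk.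
Qed.

(* Sorting 0, 1 and the breakpoints inside (0, 1) gives the partition. *)
Lemma partition_avoiding (s : seq R) : exists n (a : nat -> R),
  [/\ a 0%N = 0, a n = 1, (forall k, (k < n)%N -> a k < a k.+1) &
      forall k p, (k < n)%N -> p \in s -> ~ (a k < p < a k.+1)].
Proof.
pose s' := sort <=%O (undup (0 :: 1 :: [seq p <- s | (0 < p) && (p < 1)])).
have mem0 : 0 \in s' by rewrite mem_sort mem_undup !inE eqxx.
have mem1 : 1 \in s' by rewrite mem_sort mem_undup !inE eqxx orbT.
have mem01 x : x \in s' -> 0 <= x <= 1.
  rewrite mem_sort mem_undup !inE mem_filter => /orP [/eqP ->|/orP [/eqP ->|]].
  - by rewrite lexx ler01.
  - by rewrite ler01 lexx.
  by case/andP => /andP [h1 h2] _; rewrite !ltW.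
have sorted_lt : sorted <%O s' by rewrite sort_lt_sorted undup_uniq.
have size_gt0 : (0 < size s')%N.
  by rewrite -(index_mem 0) in mem0; apply: leq_ltn_trans mem0.
pose n := (size s').-1.
have size_n : n.+1 = size s' by rewrite /n prednK.
have sorted_le : sorted <=%O s' by apply: sort_le_sorted.
have nth_le i j : (i <= j)%N -> (j < size s')%N -> nth 0 s' i <= nth 0 s' j.
  move=> ij js; apply: (sorted_leq_nth le_trans lexx) => //.
  by rewrite inE (leq_ltn_trans ij js).
have nth01 i : (i < size s')%N -> 0 <= nth 0 s' i <= 1 by move=> h; apply/mem01/mem_nth.
exists n, (fun k => nth 0 s' k); split.
- apply/eqP; rewrite eq_le; apply/andP; split; last by case/andP: (nth01 0%N size_gt0).
  by rewrite -{2}(nth_index 0 mem0); apply: nth_le => //; rewrite index_mem.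
- have n_lt : (n < size s')%N by rewrite -size_n.
  apply/eqP; rewrite eq_le; apply/andP; split; first by case/andP: (nth01 n n_lt).
  rewrite -{1}(nth_index 0 mem1); apply: nth_le; last by rewrite -size_n.
  by rewrite -ltnS size_n index_mem.
- move=> k kn; apply: (sorted_ltn_nth lt_trans) => //; rewrite inE -size_n ltnS //.
  exact: ltnW.
move=> k p kn ps /andP [kp pk].
have ksz : (k.+1 < size s')%N by rewrite -size_n ltnS.
have p0 : 0 < p by apply: le_lt_trans kp; case/andP: (nth01 k (ltnW ksz)).
have p1 : p < 1 by apply: lt_le_trans pk _; case/andP: (nth01 _ ksz).
have ps' : p \in s' by rewrite mem_sort mem_undup !inE mem_filter p0 p1 ps !orbT.
case: (leqP (index p s') k) => hm.
  by have := nth_le _ _ hm (ltnW ksz); rewrite nth_index // leNgt kp.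
have im : (index p s' < size s')%N by rewrite index_mem.
by have := nth_le _ _ hm im; rewrite nth_index // leNgt pk.
Qed.

Lemma breakpoints_is_step X (f : J R -> X) s :
  constant_off_breakpoints f s -> is_step f.
Proof.
move=> f_const; have [n [a [a0 an a_incr a_avoid]]] := partition_avoiding s.
exists n, a; split => // k kn.
have ordered r t : a k <= sval r < a k.+1 -> a k <= sval t < a k.+1 ->
    sval r <= sval t -> f r = f t.
  move=> /andP [r1 r2] /andP [t1 t2] rt; apply: f_const => // p ps /andP [rp pt].
  by apply: (a_avoid k p kn ps); rewrite (le_lt_trans r1 rp) (le_lt_trans pt t2).
move=> r t Hr Ht; case: (leP (sval r) (sval t)) => h; first exact: ordered.
by apply/esym/ordered => //; apply: ltW.
Qed.

Lemma is_step_pair X Y (f : J R -> X) (g : J R -> Y) : is_step f -> is_step g ->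
  is_step (fun r => (f r, g r)).
Proof.
move=> /is_step_breakpoints [s1 H1] /is_step_breakpoints [s2 H2].
apply: (@breakpoints_is_step _ _ (s1 ++ s2)) => r t rt Hn.
by rewrite (H1 r t rt) ?(H2 r t rt) // => p ps; apply: Hn; rewrite mem_cat ps ?orbT.
Qed.

Lemma is_step_op G (op : G -> G -> G) (f g : J R -> G) :
  is_step f -> is_step g -> is_step (op_pt op f g).
Proof.
move=> sf sg; apply: is_step_factor (is_step_pair sf sg) _.
by move=> r t [ef eg]; rewrite /op_pt ef eg.
Qed.

Lemma is_step_inv G (inv : G -> G) (f : J R -> G) : is_step f -> is_step (inv_pt inv f).
Proof. by move=> sf; apply: is_step_factor sf _ => r t; rewrite /inv_pt => ->. Qed.

Local Notation mu := (@lebesgue_measure R).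

(* The points of J where Q fails, seen in R as in the definition of Obig. *)
Definition fail_set (Q : J R -> Prop) : set R :=
  [set r : R | exists h : ((0 <= r) && (r < 1))%R, ~ Q (exist _ r h)].

Lemma mu_le (A B : set R) : A `<=` B -> (mu A <= mu B)%E.
Proof.
rewrite /lebesgue_measure /lebesgue_stieltjes_measure /measure_extension.
exact: (le_outer_measure (measure_extension (wlength idfun))).
Qed.

Lemma mu_setU_le (A B : set R) : (mu (A `|` B) <= mu A + mu B)%E.
Proof.
rewrite /lebesgue_measure /lebesgue_stieltjes_measure /measure_extension.
exact: outer_measureU2.
Qed.

Lemma mu_ge0 (A : set R) : (0 <= mu A)%E.
Proof.
rewrite /lebesgue_measure /lebesgue_stieltjes_measure /measure_extension.
exact: outer_measure_ge0.
Qed.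

Lemma fail_set_le3 (Q Q1 Q2 Q3 : J R -> Prop) :
  (forall r, Q1 r -> Q2 r -> Q3 r -> Q r) ->
  (mu (fail_set Q) <=
     mu (fail_set Q1) + mu (fail_set Q2) + mu (fail_set Q3))%E.
Proof.
move=> Q123.
apply: (le_trans (mu_le _)) (le_trans (mu_setU_le _ _) (leeD (mu_setU_le _ _) (lexx _))).
move=> x [h nQ].
case: (pselect (Q1 (exist _ x h))) => q1; last by left; left; exists h.
case: (pselect (Q2 (exist _ x h))) => q2; last by left; right; exists h.
case: (pselect (Q3 (exist _ x h))) => q3; last by right; exists h.
by case: nQ; apply: Q123.
Qed.

Lemma fail_set_T (Q : J R -> Prop) : (forall r, Q r) -> mu (fail_set Q) = 0%E.
Proof.
move=> HQ; apply/eqP; rewrite eq_le mu_ge0 andbT -(measure0 mu).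
by apply: mu_le => x [h []].
Qed.

Lemma Obig_cst X (V : set X) c (eps : R) : V c -> 0 < eps -> Obig V eps (fun _ => c).
Proof.
move=> Vc eps0; split; first exact: is_step_cst.
by rewrite [X in (X < _)%E](fail_set_T (Q := fun=> V c)) ?lte_fin.
Qed.

Lemma Obig_mono X (V1 V2 : set X) (e1 e2 : R) (g : J R -> X) :
  V2 `<=` V1 -> e2 <= e1 -> Obig V2 e2 g -> Obig V1 e1 g.
Proof.
move=> V21 e21 [sg mg]; split => //.
apply: le_lt_trans (lt_le_trans mg _); last by rewrite lee_fin.
by apply: mu_le => x [h nV]; exists h => /V21.
Qed.

Lemma lte_half_sum (x y : \bar R) (eps : R) :
  (x < (eps / 2)%:E)%E -> (y < (eps / 2)%:E)%E -> (x + y < eps%:E)%E.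
Proof. by move=> xe ye; rewrite [eps]splitr EFinD; apply: lteD. Qed.

End StepFunctions.

Section GyrogroupAlgebra.
Variables (G : Type) (op : G -> G -> G) (z : G) (inv : G -> G).
Hypothesis gyroG : is_gyrogroup setT op z inv.

Lemma op0g a : op z a = a. Proof. by case: gyroG => _ [H _] _ _; case: (H a I). Qed.
Lemma opg0 a : op a z = a. Proof. by case: gyroG => _ [H _] _ _; case: (H a I). Qed.
Lemma opVg a : op (inv a) a = z. Proof. by case: gyroG => _ _ [H _] _; case: (H a I). Qed.
Lemma opgV a : op a (inv a) = z. Proof. by case: gyroG => _ _ [H _] _; case: (H a I). Qed.

Lemma inv_uniq x y : op y x = z -> op x y = z -> y = inv x.
Proof. by case: gyroG => _ _ [_ H] _; apply: H. Qed.

Lemma gyrations : exists gyr : G -> G -> G -> G,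
  [/\ (forall x y, injective (gyr x y)),
      (forall x y w, exists u, gyr x y u = w),
      (forall x y a b, gyr x y (op a b) = op (gyr x y a) (gyr x y b)),
      (forall x y w, op x (op y w) = op (op x y) (gyr x y w)) &
      (forall x y w, gyr (op x y) y w = gyr x y w)].
Proof.
case: gyroG => _ _ _ [gyr [aut assoc loop]]; exists gyr; split.
- by move=> x y u w; case: (aut x y I I) => _ inj _ _; apply: inj.
- by move=> x y w; case: (aut x y I I) => _ _ /(_ w I) [u _ <-]; exists u.
- by move=> x y a b; case: (aut x y I I) => _ _ _; apply.
- by move=> x y w; apply: assoc.
- by move=> x y w; apply: loop.
Qed.

(* Left cancellation: apply gyr[inv a, a] and the left gyroassociative law. *)
Lemma op_lcancel a : injective (op a).
Proof.
move=> b c E; have [gyr [inj _ _ assoc _]] := gyrations.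
apply: (inj (inv a) a).
by rewrite -[gyr _ _ b]op0g -[gyr _ _ c]op0g -(opVg a) -!assoc E.
Qed.

Lemma invK a : inv (inv a) = a.
Proof. by apply/esym/inv_uniq; [apply: opgV | apply: opVg]. Qed.

Lemma inv0 : inv z = z.
Proof. by apply/esym/inv_uniq; rewrite op0g. Qed.

Lemma opKg a b : op (inv a) (op a b) = b.
Proof.
have [gyr [_ _ _ assoc loop]] := gyrations.
rewrite assoc opVg op0g -loop opVg; apply: (@op_lcancel a).
by have := assoc z a b; rewrite !op0g.
Qed.

Lemma opKVg a b : op a (op (inv a) b) = b.
Proof. by rewrite -{1}(invK a) opKg. Qed.

End GyrogroupAlgebra.

Section StepGyrogroup.
Variables (R : realType) (G : Type) (op : G -> G -> G) (z : G) (inv : G -> G).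
Hypothesis gyroG : is_gyrogroup setT op z inv.

Lemma op_pt0 (f : J R -> G) : op_pt op f (zero_pt z) = f.
Proof. by apply: funext => r; rewrite /op_pt /zero_pt (opg0 gyroG). Qed.

Lemma op_0pt (f : J R -> G) : op_pt op (zero_pt z) f = f.
Proof. by apply: funext => r; rewrite /op_pt /zero_pt (op0g gyroG). Qed.

Lemma stepfuns_gyrogroup :
  is_gyrogroup (stepfuns R G) (op_pt op) (zero_pt z) (inv_pt inv).
Proof.
have [gyr [inj surj morph assoc loop]] := gyrations gyroG.
split.
- split; [exact: is_step_cst | by move=> f g; apply: is_step_op | by move=> f; apply: is_step_inv].
- split; first by move=> f _; rewrite op_0pt op_pt0.
  by move=> z' _ /(_ (zero_pt z) (is_step_cst R z)) [_]; rewrite op_0pt.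
- split.
    move=> f _; split; apply: funext => r;
      by rewrite /op_pt /inv_pt /zero_pt ?(opVg gyroG) ?(opgV gyroG).
  move=> f g _ _ e1 e2; apply: funext => r; apply: (inv_uniq gyroG) => //.
    exact: (congr1 (fun h => h r) e1).
  exact: (congr1 (fun h => h r) e2).
exists (fun f g h r => gyr (f r) (g r) (h r)); split.
- move=> f g sf sg; split.
  + move=> h sh; apply: is_step_factor (is_step_pair (is_step_pair sf sg) sh) _.
    by move=> r t [-> -> ->].
  + move=> u w _ _ e; apply: funext => r; apply: (inj (f r) (g r)).
    exact: (congr1 (fun h => h r) e).
  + move=> w sw.
    have [v Hv] := choice (fun r => surj (f r) (g r) (w r)).
    exists v; last by apply: funext => r; rewrite Hv.
    apply: is_step_factor (is_step_pair (is_step_pair sf sg) sw) _ => r t [e1 e2 e3].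
    by apply: (inj (f r) (g r)); rewrite Hv e1 e2 Hv e3.
  + by move=> a b _ _; apply: funext => r; apply: morph.
- by move=> f g h _ _ _; apply: funext => r; apply: assoc.
- by move=> f g h _ _ _; apply: funext => r; apply: loop.
Qed.

End StepGyrogroup.

Section TopologicalGyrogroup.
Variables (R : realType) (G : Type) (op : G -> G -> G) (z : G) (inv : G -> G).
Variable tau : set (set G).
Hypothesis topG : is_topological_gyrogroup setT tau op z inv.

Let gyroG : is_gyrogroup setT op z inv. Proof. by case: topG. Qed.
Let tauT : tau setT. Proof. by case: topG => _ []. Qed.
Let tauI U V : tau U -> tau V -> tau (U `&` V).
Proof. by case: topG => _ [_ _ _ _ H] _ _ _; apply: H. Qed.

Definition jointly_continuous (F : G -> G -> G) := forall W x y, tau W -> W (F x y) ->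
  exists A B, [/\ tau A, tau B, A x, B y &
     forall x' y', A x' -> B y' -> W (F x' y')].

Lemma jointly_continuous_fst : jointly_continuous (fun x _ => x).
Proof. by move=> W x y tW Wx; exists W, setT. Qed.

Lemma jointly_continuous_snd : jointly_continuous (fun _ y => y).
Proof. by move=> W x y tW Wx; exists setT, W. Qed.

Lemma jointly_continuous_cst c : jointly_continuous (fun _ _ => c).
Proof. by move=> W x y tW Wx; exists setT, setT. Qed.

Lemma jointly_continuous_op F1 F2 : jointly_continuous F1 -> jointly_continuous F2 ->
  jointly_continuous (fun x y => op (F1 x y) (F2 x y)).
Proof.
move=> c1 c2 W x y tW Wxy; case: topG => _ _ _ cont_op _.
have [_ /(_ (F1 x y, F2 x y)) []] := cont_op W tW; first by [].
move=> U [V [tU tV Ux Vy UV]].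
have [A1 [B1 [tA1 tB1 A1x B1y H1]]] := c1 U x y tU Ux.
have [A2 [B2 [tA2 tB2 A2x B2y H2]]] := c2 V x y tV Vy.
exists (A1 `&` A2), (B1 `&` B2); split => //; try exact: tauI.
move=> x' y' [a1 a2] [b1 b2].
by have [] := UV (F1 x' y', F2 x' y'); first by split; [apply: H1 | apply: H2].
Qed.

Lemma jointly_continuous_inv F : jointly_continuous F ->
  jointly_continuous (fun x y => inv (F x y)).
Proof.
move=> c W x y tW Wxy; case: topG => _ _ _ _ cont_inv.
have [|A [B [tA tB Ax By H]]] := c _ x y (cont_inv W tW); first by [].
by exists A, B; split => // x' y' Ax' By'; case: (H x' y' Ax' By').
Qed.

Lemma nbhds0_uniform_on_list (C : Type) (s : list C) (P : C -> Prop)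
    (F : C -> G -> G -> G) V :
  (forall c, P c -> exists A B, [/\ tau A, tau B, A z, B z &
     forall x y, A x -> B y -> V (F c x y)]) ->
  exists A B, [/\ tau A, tau B, A z, B z & forall c, List.In c s -> P c ->
     forall x y, A x -> B y -> V (F c x y)].
Proof.
move=> H; elim: s => [|c s [A [B [tA tB Az Bz IH]]]]; first by exists setT, setT.
case: (pselect (P c)) => [/H [A' [B' [tA' tB' A'z B'z H']]]|nPc].
  exists (A `&` A'), (B `&` B'); split => //; try exact: tauI.
  by move=> c' [<-|Hc] Pc' x y [ax ax'] [bx bx']; [apply: H' | apply: IH].
by exists A, B; split => // c' [<-|Hc] //; exact: IH.
Qed.

Local Notation mu := (@lebesgue_measure R).

(* As c takes finitely many values, one pair of neighbourhoods of z serves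
   all of them at once. *)
Lemma nbhds0_uniform_on_step (C : Type) (c : J R -> C) (P : C -> Prop)
    (F : C -> G -> G -> G) V :
  is_step c ->
  (forall cc, P cc -> exists A B, [/\ tau A, tau B, A z, B z &
     forall x y, A x -> B y -> V (F cc x y)]) ->
  exists A B, [/\ tau A, tau B, A z, B z & forall u w : J R -> G,
     (mu (fail_set (fun r => V (F (c r) (u r) (w r)))) <=
      mu (fail_set (fun r => P (c r))) + mu (fail_set (fun r => A (u r))) +
      mu (fail_set (fun r => B (w r))))%E].
Proof.
move=> /is_step_finite_range [s Hs] H.
have [A [B [tA tB Az Bz HAB]]] := nbhds0_uniform_on_list s H.
exists A, B; split => // u w; apply: fail_set_le3 => r Pr Ar Br.
exact: HAB (Hs r) Pr _ _ Ar Br.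
Qed.

Definition Oshift (f : J R -> G) V (eps : R) := [set op_pt op f g | g in Obig V eps].

Definition step_topology : set (set (J R -> G)) := [set U | U `<=` stepfuns R G /\
  forall f, U f -> exists V, exists eps : R,
    [/\ tau V, V z, 0 < eps & Oshift f V eps `<=` U]].

Lemma Oshift_center (f : J R -> G) V eps : V z -> 0 < eps -> Oshift f V eps f.
Proof. by move=> Vz e0; exists (zero_pt z); [exact: Obig_cst | exact: (op_pt0 gyroG)]. Qed.

Lemma Oshift_step (f : J R -> G) V eps : is_step f -> Oshift f V eps `<=` stepfuns R G.
Proof. by move=> sf _ [g [sg _] <-]; exact: is_step_op. Qed.

(* (f (+) u) (+) w = f (+) (inv f (+) ((f (+) u) (+) w)), and the last
   argument lies in V wherever u does and w is close enough to z. *)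
Lemma Oshift_sub (f : J R -> G) V eps u : is_step f -> tau V -> Obig V eps u ->
  exists W, exists del : R, [/\ tau W, W z, 0 < del &
    Oshift (op_pt op f u) W del `<=` Oshift f V eps].
Proof.
move=> sf tV [su mu_u].
have [|A [B [tA tB Az Bz HK]]] := @nbhds0_uniform_on_step _ (fun r => (f r, u r))
  (fun cc => V cc.2) (fun cc x y => op (inv cc.1) (op (op cc.1 cc.2) x)) V
  (is_step_pair sf su).
  move=> [a b] /= Vb.
  have cont : jointly_continuous (fun x _ => op (inv a) (op (op a b) x)).
    apply: jointly_continuous_op; first exact: jointly_continuous_cst.
    apply: jointly_continuous_op;
      [exact: jointly_continuous_cst | exact: jointly_continuous_fst].
  by apply: cont => //=; rewrite (opg0 gyroG) (opKg gyroG).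
set m := mu (fail_set (fun r => V (u r))) in mu_u.
have m_fin : m \is a fin_num.
  by rewrite ge0_fin_numE ?mu_ge0 //; apply: lt_trans mu_u _; rewrite ltry.
exists A, (eps - fine m); split => //; first by rewrite subr_gt0 -lte_fin fineK.
move=> _ [w [sw mu_w] <-].
exists (fun r => op (inv (f r)) (op (op (f r) (u r)) (w r))); last first.
  by apply: funext => r; rewrite /op_pt (opKVg gyroG).
split.
  apply: is_step_factor (is_step_pair (is_step_pair sf su) sw) _.
  by move=> r t [-> -> ->].
apply: le_lt_trans (HK w (zero_pt z)) _.
rewrite (fail_set_T (Q := fun r => B (zero_pt z r))) // adde0.
by rewrite /= -/m -lteBrDl // -(fineK m_fin) -EFinB.
Qed.

Lemma Oshift_open (f : J R -> G) V eps : is_step f -> tau V -> V z -> 0 < eps ->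
  step_topology (Oshift f V eps).
Proof.
by move=> sf tV Vz e0; split=> [|_ [u Ou <-]]; [exact: Oshift_step | exact: Oshift_sub].
Qed.

Lemma step_topology_on : topology_on (stepfuns R G) step_topology.
Proof.
split.
- by move=> U [].
- split => // f sf; exists setT, 1; split; rewrite ?ltr01 //; exact: Oshift_step.
- by split => // f.
- move=> F FT; split; first by move=> x [U FU Ux]; exact: (FT U FU).1 x Ux.
  move=> f [U FU Uf]; have [V [eps [tV Vz e0 H]]] := (FT U FU).2 f Uf.
  by exists V, eps; split => // x /H; exists U.
- move=> U V [US HU] [VS HV]; split; first by move=> x [/US].
  move=> f [Uf Vf].
  have [V1 [e1 [tV1 V1z e10 H1]]] := HU f Uf.
  have [V2 [e2 [tV2 V2z e20 H2]]] := HV f Vf.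
  exists (V1 `&` V2), (Num.min e1 e2); split; [exact: tauI | by [] | by rewrite lt_min e10 e20 |].
  move=> _ [g Og <-]; split; [apply: H1 | apply: H2]; exists g => //;
    by apply: Obig_mono Og; [move=> ? [] | rewrite ge_min lexx ?orbT].
Qed.

(* Separating a and b reduces, after left translation by inv a, to
   separating inv a (+) b from z, which the T1 axiom does. *)
Lemma nbhds0_separate (a b : G) : a <> b -> exists A B, [/\ tau A, tau B, A z, B z &
  forall x y, A x -> B y -> op a x <> op b y].
Proof.
move=> ab.
have ab_z : op (inv a) b <> z by move=> e; apply: ab; rewrite -(opKVg gyroG a b) e (opg0 gyroG).
case: topG => _ _ T1 _ _; have [U tU [Uab nUz]] := T1 _ _ I I ab_z.
have cont : jointly_continuous (fun x y => op (inv x) (op (inv a) (op b y))).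
  apply: jointly_continuous_op; first exact: jointly_continuous_inv jointly_continuous_fst.
  apply: jointly_continuous_op; first exact: jointly_continuous_cst.
  by apply: jointly_continuous_op; [exact: jointly_continuous_cst | exact: jointly_continuous_snd].
have [|A [B [tA tB Az Bz H]]] := cont U z z tU.
  by rewrite (inv0 gyroG) (op0g gyroG) (opg0 gyroG).
exists A, B; split => // x y Ax By e; apply: nUz.
by have := H x y Ax By; rewrite -e (opKg gyroG) (opVg gyroG).
Qed.

Lemma step_topology_hausdorff : hausdorff_on (stepfuns R G) step_topology.
Proof.
move=> f g sf sg fg.
have [r0 ne] : exists r0, f r0 <> g r0.
  apply: contrapT => h; apply: fg; apply: funext => r.
  by apply: contrapT => h'; apply: h; exists r.
have [n [a [a0 an a_incr a_step]]] := is_step_pair sf sg.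
have [r00 r01] := J_bounds r0.
have [k [kn /andP [k1 k2]]] := partition_cover a0 an a_incr r00 r01.
have [A [B [tA tB Az Bz HAB]]] := nbhds0_separate ne.
set l := a k.+1 - a k.
have l0 : 0 < l by rewrite subr_gt0; apply: a_incr.
have l20 : 0 < l / 2 by rewrite divr_gt0.
exists (Oshift f A (l/2)), (Oshift g B (l/2)); split;
  [exact: Oshift_open | exact: Oshift_open | exact: Oshift_center | exact: Oshift_center |].
apply/seteqP; split => // x [[u [su mu_u] e1] [w [sw mu_w] e2]]; exfalso.
have ak0 : 0 <= a k by have := partition_le a_incr (leq0n k) (ltnW kn); rewrite a0.
have ak1 : a k.+1 <= 1 by have := partition_le a_incr kn (leqnn n); rewrite an.
have cover : [set` `[a k, a k.+1[] `<=`
    fail_set (fun r => A (u r)) `|` fail_set (fun r => B (w r)).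
  move=> y; rewrite /= in_itv /= => /andP [y1 y2].
  have hy : (0 <= y) && (y < 1) by rewrite (le_trans ak0 y1) (lt_le_trans y2 ak1).
  have [ef eg] : (f (exist _ y hy), g (exist _ y hy)) = (f r0, g r0).
    by apply: (a_step k kn); rewrite /= ?y1 ?y2 ?k1 ?k2.
  case: (pselect (A (u (exist _ y hy)))) => Au; last by left; exists hy.
  case: (pselect (B (w (exist _ y hy)))) => Bw; last by right; exists hy.
  exfalso; apply: (HAB _ _ Au Bw); rewrite -ef -eg.
  exact: (congr1 (fun h => h (exist _ y hy)) (etrans e1 (esym e2))).
have := le_lt_trans (le_trans (mu_le cover) (mu_setU_le _ _)) (lte_half_sum mu_u mu_w).
by rewrite lebesgue_measure_itv /= lte_fin (a_incr k kn) -EFinD lte_fin ltxx.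
Qed.

Lemma step_topology_T1 : T1_on (stepfuns R G) step_topology.
Proof.
move=> x y sx sy xy; have [U [V [tU tV Ux Vy UV]]] := step_topology_hausdorff sx sy xy.
by exists U => //; split => // Uy; have : (U `&` V) y by []; rewrite UV.
Qed.

(* (f (+) u) (+) (g (+) w) = (f (+) g) (+) h where
   h = inv (f (+) g) (+) ((f (+) u) (+) (g (+) w)) is close to z. *)
Lemma step_topology_continuous_op : continuous_op (stepfuns R G) step_topology (op_pt op).
Proof.
move=> W [WS HW]; split=> [p [] //|[f g] [[sf sg] Wfg] /=].
have [V [eps [tV Vz e0 HV]]] := HW _ Wfg.
have [|A [B [tA tB Az Bz HK]]] := @nbhds0_uniform_on_step _ (fun r => (f r, g r))
  (fun _ => True) (fun cc x y => op (inv (op cc.1 cc.2)) (op (op cc.1 x) (op cc.2 y))) V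
  (is_step_pair sf sg).
  move=> [a b] _ /=.
  have cont : jointly_continuous (fun x y => op (inv (op a b)) (op (op a x) (op b y))).
    apply: jointly_continuous_op; first exact: jointly_continuous_cst.
    apply: jointly_continuous_op; apply: jointly_continuous_op;
      by [exact: jointly_continuous_cst | exact: jointly_continuous_fst |
          exact: jointly_continuous_snd].
  by apply: cont => //=; rewrite !(opg0 gyroG) (opVg gyroG).
have e20 : 0 < eps / 2 by rewrite divr_gt0.
exists (Oshift f A (eps/2)), (Oshift g B (eps/2)); split;
  [exact: Oshift_open | exact: Oshift_open | exact: Oshift_center | exact: Oshift_center |].
move=> [_ _] [/= [u [su mu_u] <-] [w [sw mu_w] <-]].
split; first by split; apply: is_step_op.
apply: HV; exists (fun r => op (inv (op (f r) (g r))) (op (op (f r) (u r)) (op (g r) (w r)))).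
  split.
    apply: is_step_factor (is_step_pair (is_step_pair sf sg) (is_step_pair su sw)) _.
    by move=> r t [-> -> -> ->].
  apply: le_lt_trans (HK u w) _.
  by rewrite (fail_set_T (Q := fun=> True)) // add0e; exact: lte_half_sum.
by apply: funext => r; rewrite /op_pt (opKVg gyroG).
Qed.

(* inv (f (+) u) = inv f (+) h where h = inv (inv f) (+) inv (f (+) u)
   is close to z. *)
Lemma step_topology_continuous_inv :
  continuous_on_carrier (stepfuns R G) step_topology (inv_pt inv).
Proof.
move=> W [WS HW]; split=> [x [] //|f [sf Wf]].
have [V [eps [tV Vz e0 HV]]] := HW _ Wf.
have [|A [B [tA tB Az Bz HK]]] := @nbhds0_uniform_on_step _ f (fun _ => True)
  (fun a x _ => op (inv (inv a)) (inv (op a x))) V sf.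
  move=> a _.
  have cont : jointly_continuous (fun x _ => op (inv (inv a)) (inv (op a x))).
    apply: jointly_continuous_op; first exact: jointly_continuous_cst.
    apply: jointly_continuous_inv.
    apply: jointly_continuous_op;
      [exact: jointly_continuous_cst | exact: jointly_continuous_fst].
  by apply: cont => //=; rewrite (opg0 gyroG) (opVg gyroG).
exists A, eps; split => // _ [u [su mu_u] <-]; split; first exact: is_step_op.
apply: HV; exists (fun r => op (inv (inv (f r))) (inv (op (f r) (u r)))).
  split.
    by apply: is_step_factor (is_step_pair sf su) _ => r t [-> ->].
  apply: le_lt_trans (HK u (zero_pt z)) _.
  rewrite (fail_set_T (Q := fun=> True)) // (fail_set_T (Q := fun r => B (zero_pt z r))) //.
  by rewrite add0e adde0.
by apply: funext => r; rewrite /op_pt /inv_pt (opKVg gyroG).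
Qed.

End TopologicalGyrogroup.

Theorem mainTheorem3 (R : realType) (G : Type) (op : G -> G -> G) (z : G)
    (inv : G -> G) (tau : set (set G)) :
  is_topological_gyrogroup setT tau op z inv ->
  exists T : set (set (J R -> G)),
    [/\ is_topological_gyrogroup (stepfuns R G) T (op_pt op) (zero_pt z) (inv_pt inv),
        hausdorff_on (stepfuns R G) T,
        (* {O(V,eps)} is a local base at the identity 0^bullet *)
        (forall V (eps : R), tau V -> V z -> 0 < eps ->
           is_nbhd T (zero_pt z) (Obig V eps)) /\
        (forall U, T U -> U (zero_pt z) ->
           exists V, exists eps : R,
             [/\ tau V, V z, 0 < eps & Obig V eps `<=` U]) &
        (* {f (+) O(V,eps)} is a local base at f, for each f in G^bullet *)
        forall f, stepfuns R G f ->
          (forall V (eps : R), tau V -> V z -> 0 < eps ->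
             is_nbhd T f [set op_pt op f g | g in Obig V eps]) /\
          (forall U, T U -> U f ->
             exists V, exists eps : R,
               [/\ tau V, V z, 0 < eps &
                   [set op_pt op f g | g in Obig V eps] `<=` U])].
Proof.
move=> topG; have gyroG : is_gyrogroup setT op z inv by case: topG.
have Oshift0 V eps : Oshift op (zero_pt z) V eps = Obig V eps.
  by apply/seteqP; split=> [_ [g Og <-]|g Og];
    [rewrite (op_0pt gyroG) | exists g; rewrite ?(op_0pt gyroG)].
exists (step_topology op z tau); split.
- split; [exact: (stepfuns_gyrogroup R gyroG) | exact: (step_topology_on R topG) |
    exact: (step_topology_T1 (R:=R) topG) | exact: (step_topology_continuous_op (R:=R) topG) |
    exact: (step_topology_continuous_inv (R:=R) topG)].
- exact: (step_topology_hausdorff (R:=R) topG).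
- split=> [V eps tV Vz e0|U [_ HU] /HU [V [eps [tV Vz e0]]]];
    last by rewrite Oshift0; exists V, eps.
  by rewrite -Oshift0; exists (Oshift op (zero_pt z) V eps);
    [exact: (Oshift_open topG (is_step_cst R z)) | split => //; exact: (Oshift_center topG)].
- move=> f sf; split=> [V eps tV Vz e0|U [_ HU] /HU //].
  exists (Oshift op f V eps); first exact: (Oshift_open topG).
  by split => //; exact: (Oshift_center topG).
Qed.
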